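(* Let $n \ge 2$ be an integer, let $1 \le \underline{x}_i < \bar{x}_i$ for $i \in \{1,2\}$, and let $\varepsilon \ge 2^{-2^{n-1}}$. For $x=(x_1,x_2) \in X := [\underline{x}_1,\bar{x}_1] \times [\underline{x}_2,\bar{x}_2]$, let $S_\varepsilon(x)$ denote the set of $\varepsilon$-feasible follower's solutions of the lower-level problem $$\max_{y \in \mathbb{R}^{n+2}} \; y_1 - y_n\,(x_1 + x_2 - y_{n+1} - y_{n+2})$$ subject to $y_1 + y_n = \tfrac12$, $y_i^2 \le y_{i+1}$ for $i \in \{1,\dots,n-1\}$, $y_i \ge 0$ for $i \in \{1,\dots,n\}$, $y_{n+1} \in [0,x_1]$, $y_{n+2} \in [-x_2,x_2]$, and let $F(x,y) = x_1 - 2y_{n+1} + y_{n+2}$. Then the optimistic problem $\max_{x \in X} \max_{y \in S_\varepsilon(x)} F(x,y)$ has the optimal solution $x^*_{\mathrm{o}} = (\bar{x}_1,\bar{x}_2)$ with optimal objective value $F^*_{\mathrm{o}} = \bar{x}_1 + \bar{x}_2$, and the pessimistic problem $\max_{x \in X} \min_{y \in S_\varepsilon(x)} F(x,y)$ has the optimal solution $x^*_{\mathrm{p}} = (\underline{x}_1,\underline{x}_2)$ with optimal objective value $F^*_{\mathrm{p}} = -\underline{x}_1 - \underline{x}_2$.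
   Context: For $\varepsilon>0$, a point is $\varepsilon$-feasible for the lower-level problem if it satisfies all linear constraints ($y_1+y_n=\tfrac12$, $y_i\ge0$ for $i\le n$, the bounds on $y_{n+1},y_{n+2}$) exactly and satisfies $y_i^2 - y_{i+1} \le \varepsilon$ for all $i \in \{1,\dots,n-1\}$ (the only nonlinear constraints). An $\varepsilon$-feasible follower's solution for given $x$ is an $\varepsilon$-feasible point maximizing the lower-level objective over all $\varepsilon$-feasible points. *)

(* concrete reals R. A vector y in R^(n+2) is represented by
   y : nat -> R using 1-based indices 1..n+2 (other indices are irrelevant:
   they appear neither in the constraints nor in the objectives). *)
From Stdlib Require Import Reals.
Open Scope R_scope.

Definition eps_feasible (n : nat) (eps x1 x2 : R) (y : nat -> R) : Prop :=
  y 1%nat + y n = 1 / 2 /\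
  (forall i : nat, (1 <= i <= n)%nat -> 0 <= y i) /\
  (0 <= y (n + 1)%nat <= x1) /\
  (- x2 <= y (n + 2)%nat <= x2) /\
  (forall i : nat, (1 <= i <= n - 1)%nat -> y i ^ 2 - y (i + 1)%nat <= eps).

Definition lower_obj (n : nat) (x1 x2 : R) (y : nat -> R) : R :=
  y 1%nat - y n * (x1 + x2 - y (n + 1)%nat - y (n + 2)%nat).

Definition follower_sol (n : nat) (eps x1 x2 : R) (y : nat -> R) : Prop :=
  eps_feasible n eps x1 x2 y /\
  forall z : nat -> R, eps_feasible n eps x1 x2 z ->
    lower_obj n x1 x2 z <= lower_obj n x1 x2 y.

Definition upper_obj (n : nat) (x1 x2 : R) (y : nat -> R) : R :=
  x1 - 2 * y (n + 1)%nat + y (n + 2)%nat.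

Definition opt_val (n : nat) (eps x1 x2 v : R) : Prop :=
  (exists y, follower_sol n eps x1 x2 y /\ upper_obj n x1 x2 y = v) /\
  (forall y, follower_sol n eps x1 x2 y -> upper_obj n x1 x2 y <= v).

Definition pess_val (n : nat) (eps x1 x2 v : R) : Prop :=
  (exists y, follower_sol n eps x1 x2 y /\ upper_obj n x1 x2 y = v) /\
  (forall y, follower_sol n eps x1 x2 y -> v <= upper_obj n x1 x2 y).

(* Since y_1 + y_n = 1/2, the follower's objective equals
   1/2 - y_n (1 + x_1 + x_2 - y_{n+1} - y_{n+2}), and the bracket is at least 1
   on the feasible set; so it never exceeds 1/2, with equality iff y_n = 0.
   The squaring chain y_i = 2^(-2^(i-1)) (i < n), y_n = 0 is eps-feasible
   exactly because eps >= 2^(-2^(n-1)), hence the follower's solutions are the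
   feasible points with y_n = 0.  On them y_{n+1} in [0, x_1] and
   y_{n+2} in [-x_2, x_2] are free, so F ranges over [-x_1 - x_2, x_1 + x_2]:
   the leader maximises x_1 + x_2 optimistically and -x_1 - x_2 pessimistically. *)
From Stdlib Require Import Reals Lra Lia.
Open Scope R_scope.

Lemma opt_val_unique n eps x1 x2 v w :
  opt_val n eps x1 x2 v -> opt_val n eps x1 x2 w -> v = w.
Proof.
  intros [[y [Hy <-]] Hv] [[z [Hz <-]] Hw].
  apply Rle_antisym; [apply Hw | apply Hv]; assumption.
Qed.

Lemma pess_val_unique n eps x1 x2 v w :
  pess_val n eps x1 x2 v -> pess_val n eps x1 x2 w -> v = w.
Proof.
  intros [[y [Hy <-]] Hv] [[z [Hz <-]] Hw].
  apply Rle_antisym; [apply Hv | apply Hw]; assumption.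
Qed.

Lemma upper_obj_feasible_bounds n eps x1 x2 y :
  eps_feasible n eps x1 x2 y ->
  - x1 - x2 <= upper_obj n x1 x2 y <= x1 + x2.
Proof. intros (_ & _ & Hn1 & Hn2 & _). unfold upper_obj. lra. Qed.

Lemma lower_obj_feasible n eps x1 x2 y :
  eps_feasible n eps x1 x2 y ->
  lower_obj n x1 x2 y = 1 / 2 - y n * (1 + x1 + x2 - y (n + 1)%nat - y (n + 2)%nat).
Proof. intros (Hsum & _). unfold lower_obj. lra. Qed.

Lemma lower_obj_le_half n eps x1 x2 y :
  (1 <= n)%nat -> eps_feasible n eps x1 x2 y ->
  lower_obj n x1 x2 y <= 1 / 2 /\ (lower_obj n x1 x2 y = 1 / 2 -> y n = 0).
Proof.
  intros Hn Hy. rewrite (lower_obj_feasible _ _ _ _ _ Hy).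
  destruct Hy as (_ & Hnneg & Hn1 & Hn2 & _).
  assert (Hyn : 0 <= y n) by (apply Hnneg; lia).
  split; intros; nra.
Qed.

Lemma inv2_pow_pow2_sqr i :
  (1 <= i)%nat -> ((/ 2) ^ (2 ^ (i - 1))) ^ 2 = (/ 2) ^ (2 ^ i).
Proof.
  intros Hi. rewrite <- pow_mult. f_equal.
  destruct i as [|i]; [lia|].
  rewrite Nat.sub_succ, Nat.sub_0_r, Nat.pow_succ_r'. lia.
Qed.

Definition squaring_chain (n : nat) (a b : R) (i : nat) : R :=
  if Nat.ltb i n then (/ 2) ^ (2 ^ (i - 1))
  else if Nat.eqb i (n + 1) then a
  else if Nat.eqb i (n + 2) then b
  else 0.

Section SquaringChain.

Variables (n : nat) (a b : R).
Hypothesis n_ge2 : (2 <= n)%nat.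

Lemma squaring_chain_lt i :
  (i < n)%nat -> squaring_chain n a b i = (/ 2) ^ (2 ^ (i - 1)).
Proof. intros Hi. unfold squaring_chain. now rewrite (proj2 (Nat.ltb_lt i n) Hi). Qed.

Lemma squaring_chain_n : squaring_chain n a b n = 0.
Proof.
  unfold squaring_chain. rewrite Nat.ltb_irrefl.
  destruct (Nat.eqb_spec n (n + 1)); [lia|].
  destruct (Nat.eqb_spec n (n + 2)); [lia|]. reflexivity.
Qed.

Lemma squaring_chain_n1 : squaring_chain n a b (n + 1) = a.
Proof.
  unfold squaring_chain. destruct (Nat.ltb_spec (n + 1) n); [lia|].
  now rewrite Nat.eqb_refl.
Qed.

Lemma squaring_chain_n2 : squaring_chain n a b (n + 2) = b.
Proof.
  unfold squaring_chain. destruct (Nat.ltb_spec (n + 2) n); [lia|].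
  destruct (Nat.eqb_spec (n + 2) (n + 1)); [lia|]. now rewrite Nat.eqb_refl.
Qed.

Lemma squaring_chain_feasible eps x1 x2 :
  / 2 ^ (2 ^ (n - 1)) <= eps -> 0 <= a <= x1 -> - x2 <= b <= x2 ->
  eps_feasible n eps x1 x2 (squaring_chain n a b).
Proof.
  intros Heps Ha Hb.
  assert (Hpos : forall k, 0 < (/ 2) ^ k) by (intros; apply pow_lt; lra).
  repeat split.
  - rewrite squaring_chain_lt, squaring_chain_n by lia. simpl. lra.
  - intros i Hi. destruct (Nat.eq_dec i n) as [->|Hin].
    + rewrite squaring_chain_n. lra.
    + rewrite squaring_chain_lt by lia. now left.
  - rewrite squaring_chain_n1. lra.
  - rewrite squaring_chain_n1. lra.
  - rewrite squaring_chain_n2. lra.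
  - rewrite squaring_chain_n2. lra.
  - intros i Hi. rewrite squaring_chain_lt, inv2_pow_pow2_sqr by lia.
    destruct (Nat.eq_dec (i + 1) n) as [Hin|Hin].
    + rewrite Hin, squaring_chain_n, Rminus_0_r, pow_inv.
      now replace i with (n - 1)%nat by lia.
    + rewrite squaring_chain_lt by lia.
      replace (i + 1 - 1)%nat with i by lia.
      assert (0 < / 2 ^ (2 ^ (n - 1))) by (rewrite <- pow_inv; apply Hpos). lra.
Qed.

Lemma lower_obj_squaring_chain x1 x2 : lower_obj n x1 x2 (squaring_chain n a b) = 1 / 2.
Proof.
  unfold lower_obj. rewrite squaring_chain_lt, squaring_chain_n by lia.
  simpl. lra.
Qed.

End SquaringChain.

Section FollowerSolutions.

Variables (n : nat) (eps x1 x2 : R).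
Hypotheses (n_ge2 : (2 <= n)%nat) (eps_ge : / 2 ^ (2 ^ (n - 1)) <= eps).
Hypotheses (x1_ge0 : 0 <= x1) (x2_ge0 : 0 <= x2).

Lemma follower_solE y :
  follower_sol n eps x1 x2 y <-> eps_feasible n eps x1 x2 y /\ y n = 0.
Proof.
  split.
  - intros [Hy Hmax]. split; [exact Hy|].
    destruct (lower_obj_le_half n eps x1 x2 y) as [Hle Hhalf]; [lia | exact Hy |].
    apply Hhalf, Rle_antisym; [exact Hle |].
    rewrite <- (lower_obj_squaring_chain n 0 0 n_ge2 x1 x2).
    apply Hmax, squaring_chain_feasible; auto; lra.
  - intros [Hy Hyn]. split; [exact Hy|]. intros z Hz.
    rewrite (lower_obj_feasible _ _ _ _ _ Hy), Hyn, Rmult_0_l, Rminus_0_r.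
    now apply (lower_obj_le_half n eps x1 x2 z); [lia|].
Qed.

Lemma follower_sol_squaring_chain a b :
  0 <= a <= x1 -> - x2 <= b <= x2 -> follower_sol n eps x1 x2 (squaring_chain n a b).
Proof.
  intros Ha Hb. apply follower_solE. split.
  - now apply squaring_chain_feasible.
  - now apply squaring_chain_n.
Qed.

Lemma opt_val_sum : opt_val n eps x1 x2 (x1 + x2).
Proof.
  split.
  - exists (squaring_chain n 0 x2). split.
    + apply follower_sol_squaring_chain; lra.
    + unfold upper_obj. rewrite squaring_chain_n1, squaring_chain_n2 by lia. lra.
  - intros y [Hy _]. now apply (upper_obj_feasible_bounds n eps).
Qed.

Lemma pess_val_opp_sum : pess_val n eps x1 x2 (- x1 - x2).
Proof.
  split.
  - exists (squaring_chain n x1 (- x2)). split.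
    + apply follower_sol_squaring_chain; lra.
    + unfold upper_obj. rewrite squaring_chain_n1, squaring_chain_n2 by lia. lra.
  - intros y [Hy _]. now apply (upper_obj_feasible_bounds n eps).
Qed.

End FollowerSolutions.

Theorem mainTheorem6 (n : nat) (xl1 xu1 xl2 xu2 eps : R) :
  (2 <= n)%nat ->
  1 <= xl1 -> xl1 < xu1 ->
  1 <= xl2 -> xl2 < xu2 ->
  / 2 ^ (2 ^ (n - 1))%nat <= eps ->
  (* optimistic problem: x*_o = (xu1, xu2) is the optimal solution, value xu1 + xu2 *)
  (opt_val n eps xu1 xu2 (xu1 + xu2) /\
   (forall x1 x2, xl1 <= x1 <= xu1 -> xl2 <= x2 <= xu2 ->
      exists v, opt_val n eps x1 x2 v /\ v <= xu1 + xu2) /\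
   (forall x1 x2, xl1 <= x1 <= xu1 -> xl2 <= x2 <= xu2 ->
      opt_val n eps x1 x2 (xu1 + xu2) -> x1 = xu1 /\ x2 = xu2)) /\
  (* pessimistic problem: x*_p = (xl1, xl2) is the optimal solution, value -xl1 - xl2 *)
  (pess_val n eps xl1 xl2 (- xl1 - xl2) /\
   (forall x1 x2, xl1 <= x1 <= xu1 -> xl2 <= x2 <= xu2 ->
      exists v, pess_val n eps x1 x2 v /\ v <= - xl1 - xl2) /\
   (forall x1 x2, xl1 <= x1 <= xu1 -> xl2 <= x2 <= xu2 ->
      pess_val n eps x1 x2 (- xl1 - xl2) -> x1 = xl1 /\ x2 = xl2)).
Proof.
  intros Hn Hl1 Hlu1 Hl2 Hlu2 Heps.
  split; [split; [|split] | split; [|split]].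
  - apply opt_val_sum; auto; lra.
  - intros x1 x2 Hx1 Hx2. exists (x1 + x2).
    split; [apply opt_val_sum; auto; lra | lra].
  - intros x1 x2 Hx1 Hx2 Hopt.
    assert (Hv := opt_val_unique _ _ _ _ _ _ Hopt
                    (opt_val_sum n eps x1 x2 Hn Heps ltac:(lra) ltac:(lra))).
    lra.
  - apply pess_val_opp_sum; auto; lra.
  - intros x1 x2 Hx1 Hx2. exists (- x1 - x2).
    split; [apply pess_val_opp_sum; auto; lra | lra].
  - intros x1 x2 Hx1 Hx2 Hpess.
    assert (Hv := pess_val_unique _ _ _ _ _ _ Hpess
                    (pess_val_opp_sum n eps x1 x2 Hn Heps ltac:(lra) ltac:(lra))).
    lra.
Qed.
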